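(* Let $f:\{0,1\}^n\to\{0,1\}^m$ and let $S=((\Lambda,\Gamma),(s_0,\dots,s_{k-1}))$ be a step CRN all of whose rules are $(2,0)$ rules. Suppose that for each input bit $x_i$ and each output bit $y_j$ there are species $0_{x_i},1_{x_i},0_{y_j},1_{y_j}$ (these $2n+2m$ species pairwise distinct) and nonnegative integers $c_{0,x_i},c_{1,x_i},c_{0,y_j},c_{1,y_j}$, such that for every input $b\in\{0,1\}^n$: the step CRN with steps $(s_0+X(b),s_1,\dots,s_{k-1})$, where $X(b)$ consists of exactly $c_{b_i,x_i}$ copies of $(b_i)_{x_i}$ and zero copies of $(1-b_i)_{x_i}$ for each $i$, has the property that every configuration in $\mathrm{TERM}_k$ contains, for each $j$, at least $c_{a,y_j}$ copies of $a_{y_j}$ and zero copies of $(1-a)_{y_j}$, where $a=f(b)_j$. Suppose further that $b,b'\in\{0,1\}^n$ differ only in coordinate $j_0$ and that $f(b)$ and $f(b')$ differ exactly in the coordinates $i_1,\dots,i_t$. Writing $C(z)=c_{0,z}+c_{1,z}$, we have $C(x_{j_0})\ge\sum_{r=1}^t C(y_{i_r})$.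
   Context: A configuration over an ordered alphabet of species $\Lambda$ is a vector in $\mathbb{Z}_{\ge 0}^{|\Lambda|}$ of copy counts. A $(2,0)$ rule has the form $A+B\to\emptyset$ (possibly $A=B$). A configuration is terminal if no rule applies. A step CRN with $k$ steps is $((\Lambda,\Gamma),(s_0,\dots,s_{k-1}))$; $\mathrm{REACH}_1$ is the set of configurations reachable by finitely many rule applications from $s_0$ and $\mathrm{TERM}_1$ its terminal elements; for $i\ge2$, $\mathrm{REACH}_i$ is the set of configurations reachable from $T+s_{i-1}$ for some $T\in\mathrm{TERM}_{i-1}$, and $\mathrm{TERM}_i$ its terminal elements. *)

From mathcomp Require Import all_boot.
Set Implicit Arguments. Unset Strict Implicit. Unset Printing Implicit Defensive.

(* Species: the ordered alphabet Lambda = 'I_L.  Configurations: copy counts. *)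
Definition config (L : nat) := 'I_L -> nat.

Definition cadd L (c d : config L) : config L := fun s => c s + d s.

(* A (2,0) rule A + B -> 0 is the pair (A, B) (possibly A = B). *)
Definition rule L := ('I_L * 'I_L)%type.

Definition consumed L (r : rule L) (s : 'I_L) : nat := (s == r.1) + (s == r.2).

Definition applicable L (r : rule L) (c : config L) : Prop :=
  forall s, consumed r s <= c s.

Definition step1 L (G : seq (rule L)) (c c' : config L) : Prop :=
  exists2 r, r \in G & applicable r c /\ forall s, c' s + consumed r s = c s.

Inductive reach L (G : seq (rule L)) : config L -> config L -> Prop :=
| reach_refl c : reach G c c
| reach_step c c' c'' : step1 G c c' -> reach G c' c'' -> reach G c c''.

Definition terminal L (G : seq (rule L)) (c : config L) : Prop :=
  forall r, r \in G -> ~ applicable r c.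

(* Given the set P = TERM_{i-1}, and remaining steps, compute the final TERM. *)
Fixpoint TERMfrom L (G : seq (rule L)) (P : config L -> Prop) (steps : seq (config L))
  : config L -> Prop :=
  match steps with
  | [::] => P
  | s :: rest =>
      TERMfrom G (fun c => exists T c0, [/\ P T, (forall x, c0 x = T x + s x),
                                             reach G c0 c & terminal G c]) rest
  end.

(* TERM_k of the step CRN ((Lambda,G),(s0, s1, ..., s_{k-1})), rest = (s1,...,s_{k-1}).
   TERM_1 = terminal configurations reachable from s0 (= 0 + s0). *)
Definition TERMk L (G : seq (rule L)) (s0 : config L) (rest : seq (config L))
  : config L -> Prop :=
  TERMfrom G (fun c => forall x, c x = 0) (s0 :: rest).

Definition Xin L n (sx : bool -> 'I_n -> 'I_L) (cx : bool -> 'I_n -> nat)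
  (b : {ffun 'I_n -> bool}) : config L :=
  fun s => \sum_(i < n) (s == sx (b i) i) * cx (b i) i.

(** A CRN whose rules all have the form A + B -> 0 is nonexpansive for the
    L1 distance on configurations: if c0 reaches a terminal c, then any c0'
    reaches a terminal c' with |c - c'| <= |c0 - c0'|.  Firing a rule either
    can be mirrored from c0' (leaving the distance unchanged), or the rule is
    disabled in c0', and then firing it from c0 does not move away from c0'.
    The property propagates through the steps of a step CRN, so two inputs
    differing in bit j0 (distance at most C(x_j0)) lead to terminal
    configurations at distance at most C(x_j0); yet every flipped output bit
    y forces a difference of at least C(y) on the two species of y. *)

From mathcomp Require Import all_boot zify.
Set Implicit Arguments. Unset Strict Implicit. Unset Printing Implicit Defensive.

Section Configurations.

Variable L : nat.
Implicit Types (c d v : config L) (r : rule L).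

Definition population c := \sum_(s < L) c s.

Definition single (p : 'I_L) (a : nat) : config L := fun s => (s == p) * a.

Definition l1dist c d := \sum_(s < L) (c s - d s + (d s - c s)).

Lemma population_single p a : population (single p a) = a.
Proof.
by rewrite /population /single (bigD1 p) //= eqxx mul1n big1 ?addn0 // => s /negbTE ->.
Qed.

Lemma l1distC c d : l1dist c d = l1dist d c.
Proof. by apply: eq_bigr => s _; rewrite addnC. Qed.

Lemma l1dist_le_population c d : l1dist c d <= population c + population d.
Proof. by rewrite /population -big_split; apply: leq_sum => s _ /=; lia. Qed.

Lemma eq_l1dist c d c1 d1 : c =1 c1 -> d =1 d1 -> l1dist c d = l1dist c1 d1.
Proof. by move=> Hc Hd; apply: eq_bigr => s _; rewrite Hc Hd. Qed.

Lemma l1dist_cancel k c d c1 d1 :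
  (forall s, c s = c1 s + k s) -> (forall s, d s = d1 s + k s) ->
  l1dist c d = l1dist c1 d1.
Proof. by move=> Hc Hd; apply: eq_bigr => s _; rewrite Hc Hd; lia. Qed.

Lemma l1dist_inj_le (I : finType) (h : I -> 'I_L) (P : pred I) c d :
  injective h ->
  \sum_(i | P i) (c (h i) - d (h i) + (d (h i) - c (h i))) <= l1dist c d.
Proof.
move=> inj_h; rewrite -(big_imset (fun s => c s - d s + (d s - c s))) /=;
  last by move=> i j _ _ /inj_h.
by rewrite /l1dist [X in _ <= X](bigID (mem (h @: P))) leq_addr.
Qed.

Definition applicableb r c := [forall s, consumed r s <= c s].

Lemma applicableP r c : reflect (applicable r c) (applicableb r c).
Proof. exact: forallP. Qed.

Lemma sum_consumed r : \sum_(s < L) consumed r s = 2.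
Proof.
have one p : \sum_(s < L) (s == p) = 1.
  by rewrite -(population_single p 1); apply: eq_bigr => s _; rewrite /single muln1.
by rewrite big_split /= !one.
Qed.

Lemma consumed_le2 r s : consumed r s <= 2.
Proof. by rewrite /consumed; case: (s == r.1); case: (s == r.2). Qed.

Definition fire r c : config L := fun s => c s - consumed r s.

Lemma fireK r c : applicable r c -> forall s, fire r c s + consumed r s = c s.
Proof. by move=> Hr s; rewrite subnK. Qed.

Lemma population_fire r c d :
  (forall s, d s + consumed r s = c s) -> population d + 2 = population c.
Proof. by move=> Hd; rewrite -(sum_consumed r) -big_split; apply: eq_bigr. Qed.

(* The disabled rule lacks a reactant s0 in v; firing it from c moves c
   towards v at s0 by as much as the at most two units it moves away elsewhere. *)
Lemma l1dist_fire_disabled r c d v :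
  applicable r c -> ~ applicable r v -> (forall s, d s + consumed r s = c s) ->
  l1dist d v <= l1dist c v.
Proof.
move=> Hc /applicableP /forallPn [s0]; rewrite -ltnNge => Hs0 Hd.
rewrite -(leq_add2r 2) -[X in _ + X <= _](population_single s0 2).
rewrite -{2}(sum_consumed r) -!big_split leq_sum // => s _ /=.
have := Hd s; have := Hc s; have := consumed_le2 r s.
by rewrite /single; have [->|_] := eqVneq s s0; rewrite /= ?mul1n ?mul0n; lia.
Qed.

End Configurations.

Section Reachability.

Variables (L : nat) (G : seq (rule L)).
Implicit Types (c d u v : config L) (r : rule L).

Lemma step1_fire r c : r \in G -> applicable r c -> step1 G c (fire r c).
Proof. by move=> Hr Ha; exists r => //; split; last exact: fireK. Qed.

Lemma terminalP c : terminal G c \/ exists2 r, r \in G & applicable r c.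
Proof.
case: (boolP (has (fun r => applicableb r c) G)) => [/hasP [r Hr /applicableP]|/hasPn Hnone].
  by right; exists r.
by left=> r /Hnone /applicableP.
Qed.

Lemma reach_terminal_closer c :
  exists2 u, reach G c u /\ terminal G u &
    forall v, terminal G v -> l1dist v u <= l1dist v c.
Proof.
have [N] := ubnP (population c); elim: N c => // N IH c Hpop.
have [Hc|[r Hr Ha]] := terminalP c; first by exists c => //; split=> //; constructor.
have Hfire := fireK Ha.
have /IH [u [Hreach Hu] Hclose] : population (fire r c) < N.
  by have := population_fire Hfire; lia.
exists u.
  by split=> //; apply: reach_step Hreach; exact: step1_fire.
move=> v Hv; apply: leq_trans (Hclose v Hv) _.
by rewrite ![l1dist v _]l1distC; apply: l1dist_fire_disabled (Hv r Hr) Hfire.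
Qed.

Lemma reach_terminal_l1dist c0 c : reach G c0 c -> terminal G c ->
  forall c0', exists2 c', reach G c0' c' /\ terminal G c' &
    l1dist c c' <= l1dist c0 c0'.
Proof.
elim=> {c0 c} [c|c0 d c [r Hr [Ha Hd]] _ IH] Hc c0'.
  by have [u Hu Hclose] := reach_terminal_closer c0'; exists u; last exact: Hclose.
have [Ha'|Ha'] := applicableP r c0'.
  have Hfire := fireK Ha'.
  have [c' [Hreach Hc'] Hdist] := IH Hc (fire r c0').
  exists c'; first by split=> //; apply: reach_step Hreach; exact: step1_fire.
  by rewrite (@l1dist_cancel _ (consumed r) c0 c0' d (fire r c0')) // => s;
    rewrite ?Hd ?Hfire.
have [c' Hc' Hdist] := IH Hc c0'; exists c' => //.
by apply: leq_trans Hdist (l1dist_fire_disabled Ha Ha' Hd).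
Qed.

End Reachability.

Section StepCRN.

Variables (L : nat) (G : seq (rule L)).
Implicit Types (P : config L -> Prop) (c s : config L).

Definition stage P s c :=
  exists T c0, [/\ P T, (forall x, c0 x = T x + s x), reach G c0 c & terminal G c].

Lemma TERMfrom_cons P s rest : TERMfrom G P (s :: rest) = TERMfrom G (stage P s) rest.
Proof. by []. Qed.

Definition l1_within (delta : nat) P P' :=
  forall c, P c -> exists2 c', P' c' & l1dist c c' <= delta.

Lemma stage_within delta P P' s s' :
  (forall T, P T -> exists2 T', P' T' & l1dist (cadd T s) (cadd T' s') <= delta) ->
  l1_within delta (stage P s) (stage P' s').
Proof.
move=> HP c [T [c0 [HT Hc0 Hreach Hc]]].
have [T' HT' Hdelta] := HP T HT.
have [c' [Hreach' Hc'] Hdist] := reach_terminal_l1dist Hreach Hc (cadd T' s').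
exists c'; first by exists T', (cadd T' s').
by apply: leq_trans Hdist _; rewrite (@eq_l1dist _ c0 _ (cadd T s) (cadd T' s')).
Qed.

Lemma TERMfrom_within delta P P' rest :
  l1_within delta P P' -> l1_within delta (TERMfrom G P rest) (TERMfrom G P' rest).
Proof.
elim: rest P P' => [|s rest IH] P P' HP //=; apply: IH; apply: stage_within => T HT.
have [T' HT' Hdist] := HP T HT; exists T' => //.
by rewrite (@l1dist_cancel _ s _ _ T T').
Qed.

Lemma TERMk_within s0 s0' rest :
  l1_within (l1dist s0 s0') (TERMk G s0 rest) (TERMk G s0' rest).
Proof.
rewrite /TERMk !TERMfrom_cons; apply: TERMfrom_within; apply: stage_within => T HT.
exists T => //.
by rewrite (@l1dist_cancel _ T _ _ s0 s0') // => x; rewrite /cadd addnC.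
Qed.

Lemma TERMfrom_nonempty P rest : (exists T, P T) -> exists c, TERMfrom G P rest c.
Proof.
elim: rest P => [|s rest IH] P [T HT] //=; first by exists T.
apply: IH; have [u [Hreach Hu] _] := reach_terminal_closer G (cadd T s).
by exists u, T, (cadd T s).
Qed.

Lemma TERMk_nonempty s0 rest : exists c, TERMk G s0 rest c.
Proof. by apply: TERMfrom_nonempty; exists (fun=> 0). Qed.

End StepCRN.

Section InputOutput.

Variable L : nat.

Lemma l1dist_Xin_flip n (sx : bool -> 'I_n -> 'I_L) (cx : bool -> 'I_n -> nat)
    (s0 : config L) (b b' : {ffun 'I_n -> bool}) (j0 : 'I_n) :
  b j0 != b' j0 -> (forall i, i != j0 -> b i = b' i) ->
  l1dist (cadd s0 (Xin sx cx b)) (cadd s0 (Xin sx cx b')) <= cx false j0 + cx true j0.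
Proof.
move=> Hj0 Hb.
pose common s := s0 s + \sum_(i < n | i != j0) (s == sx (b i) i) * cx (b i) i.
rewrite (@l1dist_cancel _ common _ _ (single (sx (b j0) j0) (cx (b j0) j0))
                                     (single (sx (b' j0) j0) (cx (b' j0) j0))).
- apply: leq_trans (l1dist_le_population _ _) _; rewrite !population_single.
  by move: Hj0; case: (b j0); case: (b' j0) => //= _; rewrite addnC.
- by move=> s; rewrite /cadd /Xin /common /single (bigD1 j0) //= addnCA.
- move=> s; rewrite /cadd /Xin /common /single (bigD1 j0) //=.
  by rewrite addnCA (eq_bigr (fun i => (s == sx (b i) i) * cx (b i) i)) => // i /Hb ->.
Qed.

Lemma l1dist_ge_flipped_outputs m (sy : bool -> 'I_m -> 'I_L) (cy : bool -> 'I_m -> nat)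
    (y y' : 'I_m -> bool) (c c' : config L) :
  (forall a a' j j', sy a j = sy a' j' -> a = a' /\ j = j') ->
  (forall j, cy (y j) j <= c (sy (y j) j) /\ c (sy (~~ y j) j) = 0) ->
  (forall j, cy (y' j) j <= c' (sy (y' j) j) /\ c' (sy (~~ y' j) j) = 0) ->
  \sum_(j < m | y j != y' j) (cy false j + cy true j) <= l1dist c c'.
Proof.
move=> Hsy Hc Hc'.
have inj_sy : injective (fun p : bool * 'I_m => sy p.1 p.2).
  by move=> [a j] [a2 j2] /= /Hsy [-> ->].
apply: leq_trans (l1dist_inj_le (fun p => y p.2 != y' p.2) c c' inj_sy).
rewrite (eq_bigl (fun p => xpredT p.1 && (y p.2 != y' p.2))) //.
pose g s := c s - c' s + (c' s - c s).
rewrite -(pair_big_dep xpredT (fun _ j => y j != y' j) (fun a j => g (sy a j))).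
rewrite big_bool -big_split leq_sum // => j Hj /=.
have [Hy1 Hy0] := Hc j; have [Hy1' Hy0'] := Hc' j.
by move: Hj Hy1 Hy0 Hy1' Hy0'; case: (y j); case: (y' j) => //= _; rewrite /g; lia.
Qed.

End InputOutput.

Theorem mainTheorem4 (n m L : nat)
  (f : {ffun 'I_n -> bool} -> {ffun 'I_m -> bool})
  (G : seq (rule L)) (s0 : config L) (rest : seq (config L))
  (sx : bool -> 'I_n -> 'I_L) (sy : bool -> 'I_m -> 'I_L)
  (cx : bool -> 'I_n -> nat) (cy : bool -> 'I_m -> nat) :
  (forall a a' i i', sx a i = sx a' i' -> a = a' /\ i = i') ->
  (forall a a' j j', sy a j = sy a' j' -> a = a' /\ j = j') ->
  (forall a a' i j, sx a i <> sy a' j) ->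
  (forall b c, TERMk G (cadd s0 (Xin sx cx b)) rest c ->
     forall j, cy (f b j) j <= c (sy (f b j) j) /\ c (sy (~~ f b j) j) = 0) ->
  forall (b b' : {ffun 'I_n -> bool}) (j0 : 'I_n),
  b j0 != b' j0 -> (forall i, i != j0 -> b i = b' i) ->
  \sum_(j < m | f b j != f b' j) (cy false j + cy true j) <= cx false j0 + cx true j0.
Proof.
move=> _ Hsy _ Hcorrect b b' j0 Hj0 Hb.
have [c Hc] := TERMk_nonempty G (cadd s0 (Xin sx cx b)) rest.
have [c' Hc' Hdist] := TERMk_within (cadd s0 (Xin sx cx b')) Hc.
apply: leq_trans (leq_trans Hdist (l1dist_Xin_flip sx cx s0 Hj0 Hb)).
exact: l1dist_ge_flipped_outputs Hsy (Hcorrect b c Hc) (Hcorrect b' c' Hc').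
Qed.
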